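(* Let $U$ be a countably infinite universe and let $\mathcal{C}=(L_1,L_2,\ldots)$ be a countable collection of languages over $U$. For every finite $n$, there exists an algorithm $\mathcal{A}$ that non-uniformly generates from $\mathcal{C}$, with generation times $t(L_1),t(L_2),\ldots$ (where $t(L_i)=t_{\mathcal{A}}(L_i)$), such that the following holds: every algorithm $\mathcal{G}$ with $t_{\mathcal{G}}(L_i)<t(L_i)$ for some $i\le n$ satisfies $t_{\mathcal{G}}(L_j)>t(L_j)$ for some other index $j\neq i$ with $j\le n$.
   Context: A language is an infinite subset of $U$. A collection $\mathcal{C}=(L_1,L_2,\ldots)$ is a sequence of languages; repetitions are allowed and entries are distinguished by their index. An enumeration of a language $L$ is a sequence $x_1,x_2,\ldots$ with $x_t\in L$ for all $t$ and such that every $x\in L$ equals $x_t$ for some finite $t$. A generating algorithm, at each time step $t\ge 1$, receives $x_1,\ldots,x_t$ and outputs a string $z_t\in U$. $S_t$ denotes the set of distinct strings among $x_1,\ldots,x_t$. An algorithm $\mathcal{G}$ non-uniformly generates from $\mathcal{C}$ if for every index $i$ there is a finite number $t(L_i)$ such that for every enumeration of $L_i$ presented to $\mathcal{G}$, $z_t\in L_i\setminus S_t$ for all $t$ with $|S_t|\ge t(L_i)$. The generation time $t_{\mathcal{G}}(L_i)$ of an algorithm $\mathcal{G}$ for $L_i$ is the least such number (and $\infty$ if none exists). *)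

From Stdlib Require Import ClassicalEpsilon.
From mathcomp Require Import all_boot.
Set Implicit Arguments. Unset Strict Implicit. Unset Printing Implicit Defensive.

Definition infinite_lang (U : eqType) (L : U -> Prop) : Prop :=
  forall s : seq U, exists x, L x /\ x \notin s.

Definition countably_infinite (U : countType) : Prop :=
  exists f : nat -> U, injective f.

Definition algorithm (U : Type) := seq U -> U.

(* An enumeration of L: x k is the string x_{k+1} presented at time k+1. *)
Definition enumeration (U : Type) (L : U -> Prop) (x : nat -> U) : Prop :=
  (forall k, L (x k)) /\ (forall y, L y -> exists k, x k = y).

Definition prefix (U : Type) (x : nat -> U) (t : nat) : seq U := mkseq x t.

Definition S_t (U : eqType) (x : nat -> U) (t : nat) : seq U := undup (prefix x t).
Definition card_S (U : eqType) (x : nat -> U) (t : nat) : nat := size (S_t x t).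

Definition gen_works (U : eqType) (G : algorithm U) (L : U -> Prop) (T : nat) : Prop :=
  forall x, enumeration L x ->
  forall t, 1 <= t -> T <= card_S x t ->
    L (G (prefix x t)) /\ G (prefix x t) \notin S_t x t.

(* Generation time: the least working T (Some T), or infinity (None). *)
Definition is_gen_time (U : eqType) (G : algorithm U) (L : U -> Prop)
  (o : option nat) : Prop :=
  match o with
  | Some T => gen_works G L T /\ (forall T', T' < T -> ~ gen_works G L T')
  | None => forall T, ~ gen_works G L T
  end.

Definition gen_time (U : eqType) (G : algorithm U) (L : U -> Prop) : option nat :=
  epsilon (inhabits None) (is_gen_time G L).

Definition olt (a b : option nat) : Prop :=
  match a, b with
  | Some m, Some n => m < n
  | Some _, None => True
  | None, _ => False
  end.

Definition nonuniformly_generates (U : eqType) (A : algorithm U)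
  (C : nat -> U -> Prop) : Prop :=
  forall i, exists T, gen_works A (C i) T.

From Pilot Require Import Defs.
From mathcomp Require Import all_boot boolp.
From Stdlib Require Import ClassicalEpsilon.
Set Implicit Arguments. Unset Strict Implicit. Unset Printing Implicit Defensive.

(* Among the algorithms with finite generation times on L_1, ..., L_n, pick one,
   G0, minimising the sum of these n times; a minimiser of a sum of coordinates
   is Pareto-optimal.  It remains to improve G0 into an algorithm that is no
   slower on L_1, ..., L_n and generates non-uniformly from the whole
   collection.  On a sample S it outputs an unseen string common to a priority
   family of languages consistent with S: the first k of them, together with
   every L_i (i <= n) on which G0 already succeeds at size |S|, for the largest
   k <= |S| admitting such a string (and defers to G0 if there is none).  Once
   |S| exceeds the size of every finite intersection of languages among the
   first max(k, n), level k always admits a fresh string, so L_j is eventually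
   in the family for good. *)

Section GenerationTime.
Variables (U : eqType) (G : algorithm U) (L : U -> Prop).

Lemma gen_timeP : is_gen_time G L (gen_time G L).
Proof.
apply: epsilon_spec.
have [[T0 worksT0]|never] := pselect (exists T, gen_works G L T); last first.
  by exists None => T worksT; apply: never; exists T.
have exT : exists T, `[< gen_works G L T >] by exists T0; apply: asboolT.
have [T /asboolP worksT minT] := ex_minnP exT.
exists (Some T); split=> // T' ltT'T /asboolT /minT.
by rewrite leqNgt ltT'T.
Qed.

Lemma gen_time_works T : gen_time G L = Some T -> gen_works G L T.
Proof. by move=> eT; have := gen_timeP; rewrite eT => -[]. Qed.

Lemma gen_time_le T :
  gen_works G L T -> exists2 T', gen_time G L = Some T' & T' <= T.
Proof.
move=> worksT; have := gen_timeP; case: (gen_time G L) => [T'|/(_ T)] //.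
move=> [_ minT']; exists T' => //.
by rewrite leqNgt; apply/negP => /minT'.
Qed.

End GenerationTime.

Lemma olt_Some_r (o : option nat) b :
  olt o (Some b) -> exists2 a, o = Some a & a < b.
Proof. by case: o => [a|] //= ltab; exists a. Qed.

Lemma nolt_Some_l a (o : option nat) :
  ~ olt (Some a) o -> exists2 b, o = Some b & b <= a.
Proof. by case: o => [b|] //= /negP; rewrite -leqNgt; exists b. Qed.

Lemma finite_family_size_bound (I : finType) (U : eqType) (Q : I -> U -> Prop) :
  exists d, forall F (s : seq U), (forall y, y \in s -> Q F y) ->
    (forall y, Q F y -> y \in s) -> size (undup s) <= d.
Proof.
have /fin_all_exists [b sizeb] : forall F, exists d, forall s : seq U,
    (forall y, y \in s -> Q F y) -> (forall y, Q F y -> y \in s) ->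
    size (undup s) <= d.
  move=> F.
  have [[c Qc]|no_cover] := pselect (exists c : seq U, forall y, Q F y -> y \in c).
    exists (size c) => s sQ _; apply: uniq_leq_size (undup_uniq s) _ => y.
    by rewrite mem_undup => /sQ /Qc.
  by exists 0 => s _ Qs; case: no_cover; exists s.
exists (\max_F b F) => F s sQ Qs.
exact: leq_trans (sizeb F s sQ Qs) (leq_bigmax F).
Qed.

Lemma ltn_sum_ord n (f g : 'I_n -> nat) i :
  (forall j, f j <= g j) -> f i < g i -> \sum_j f j < \sum_j g j.
Proof.
move=> lefg ltfgi; rewrite (bigD1 i) //= [X in _ < X](bigD1 i) //= -addSn.
by rewrite leq_add // leq_sum.
Qed.

Section SumMinimizer.
Variables (X : Type) (t : X -> nat -> option nat) (n : nat).

Definition finite_below x := forall j, j < n -> t x j <> None.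

Definition total x := \sum_(j < n) odflt 0 (t x j).

Lemma exists_total_minimizer : (exists x, finite_below x) ->
  exists2 x, finite_below x & forall y, finite_below y -> total x <= total y.
Proof.
move=> [x0 fin_x0].
have exm : exists m, `[< exists2 x, finite_below x & total x = m >].
  by exists (total x0); apply/asboolP; exists x0.
have [_ /asboolP [x fin_x <-] minx] := ex_minnP exm.
by exists x => // y fin_y; apply: minx; apply/asboolP; exists y.
Qed.

Lemma total_le_pointwise x y : finite_below x ->
  (forall j b, j < n -> t x j = Some b -> exists2 a, t y j = Some a & a <= b) ->
  total y <= total x.
Proof.
move=> fin_x le_yx; apply: leq_sum => j _.
case ex: (t x j) => [b|]; last by case: (fin_x j (ltn_ord j)).
by have [a -> /= leab] := le_yx j b (ltn_ord j) ex.
Qed.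

Lemma total_minimizer_pareto a : finite_below a ->
  (forall g, finite_below g -> total a <= total g) ->
  forall g i, i < n -> olt (t g i) (t a i) ->
  exists j, j < n /\ j <> i /\ olt (t a j) (t g j).
Proof.
move=> fin_a min_a g i ltin ltgai; apply: NNPP => no_j.
have [c gi ltc] : exists2 c, t g i = Some c & c < odflt 0 (t a i).
  case eai: (t a i) ltgai => [b|]; last by case: (fin_a i ltin).
  by move/olt_Some_r.
have le_ga j : j < n -> exists2 c, t g j = Some c & c <= odflt 0 (t a j).
  move=> ltjn; have [->|neji] := eqVneq j i; first by exists c; last exact: ltnW.
  case eaj: (t a j) => [b|]; last by case: (fin_a j ltjn).
  apply: nolt_Some_l => ltagj; apply: no_j; exists j.
  by split; last split; [|apply/eqP|rewrite eaj].
have fin_g : finite_below g by move=> j /le_ga [c' ->].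
have := min_a g fin_g; apply/negP; rewrite -ltnNge.
apply: (ltn_sum_ord (i := Ordinal ltin)) => [j|]; last by rewrite /= gi.
by have [c' -> /=] := le_ga j (ltn_ord j).
Qed.

End SumMinimizer.

Section PriorityGenerator.
Variables (U : eqType) (C : nat -> U -> Prop) (n : nat) (G0 : algorithm U).

Definition consistent (s : seq U) j := forall y, y \in s -> C j y.

Definition certified s i := [/\ i < n, consistent s i &
  exists2 T, gen_time G0 (C i) = Some T & T <= size (undup s)].

Definition priority s k j := (j < k /\ consistent s j) \/ certified s j.

Definition fresh_common s k y := (forall j, priority s k j -> C j y) /\ y \notin s.

Definition top_level s :=
  \max_(k < (size (undup s)).+1 | `[< exists y, fresh_common s k y >]) k.

Definition priority_gen : algorithm U := fun s =>
  if `[< exists y, fresh_common s (top_level s) y >]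
  then epsilon (inhabits (G0 s)) (fresh_common s (top_level s))
  else G0 s.

Lemma priority_consistent s k j : priority s k j -> consistent s j.
Proof. by case=> [[]|[]]. Qed.

Lemma priority_lt s k j : priority s k j -> j < maxn k n.
Proof. by rewrite leq_max => -[[->]|[->]]; rewrite ?orbT. Qed.

Lemma enumeration_consistent j x t :
  enumeration (C j) x -> consistent (Defs.prefix x t) j.
Proof. by move=> [Cx _] y /mapP [k _ ->]. Qed.

Lemma top_levelP s k : k <= size (undup s) -> (exists y, fresh_common s k y) ->
  k <= top_level s /\ exists y, fresh_common s (top_level s) y.
Proof.
rewrite -ltnS => ltk /asboolT freshk; split.
  exact: (leq_bigmax_cond (Ordinal ltk)).
rewrite /top_level (bigmax_eq_arg (Ordinal ltk)) //.
by case: arg_maxnP => // j /asboolP.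
Qed.

Lemma priority_gen_fresh s : (exists y, fresh_common s (top_level s) y) ->
  fresh_common s (top_level s) (priority_gen s).
Proof. by move=> ex; rewrite /priority_gen asboolT //; apply: epsilon_spec. Qed.

Lemma fresh_common_large_sample k :
  exists d, forall s, d < size (undup s) -> exists y, fresh_common s k y.
Proof.
pose N := maxn k n.
have [d boundd] := finite_family_size_bound
  (fun (F : {set 'I_N}) y => forall j : 'I_N, j \in F -> C j y).
exists d => s ltds; apply: NNPP => no_fresh.
pose F := [set j : 'I_N | `[< priority s k j >]].
have common_F y :
    (forall j : 'I_N, j \in F -> C j y) -> forall j, priority s k j -> C j y.
  move=> CFy j pj; apply: (CFy (Ordinal (priority_lt pj))).
  by rewrite inE; apply: asboolT.
suff : size (undup s) <= d by rewrite leqNgt ltds.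
apply: (boundd F) => y.
  by move=> sy j; rewrite inE => /asboolP pj; apply: priority_consistent pj y sy.
by move=> /common_F Cy; apply/negPn/negP => nsy; apply: no_fresh; exists y.
Qed.

Lemma priority_gen_works_certified i T : i < n -> gen_time G0 (C i) = Some T ->
  gen_works priority_gen (C i) T.
Proof.
move=> ltin G0i x enumx t t_ge1 leT.
have certi : certified (Defs.prefix x t) i.
  by split=> //; [exact: enumeration_consistent|exists T].
have [ex|no_fresh] :=
  pselect (exists y, fresh_common (Defs.prefix x t) (top_level (Defs.prefix x t)) y).
  have [Cy nsy] := priority_gen_fresh ex.
  by split; [apply: Cy; right|rewrite mem_undup].
rewrite /priority_gen asboolF //.
exact: gen_time_works G0i x enumx t t_ge1 leT.
Qed.

Lemma priority_gen_nonuniform : nonuniformly_generates priority_gen C.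
Proof.
move=> k; have [d freshd] := fresh_common_large_sample k.+1.
exists (maxn d.+1 k.+1) => x enumx t _; rewrite geq_max => /andP [ltd ltk].
have [lek ex] := top_levelP ltk (freshd _ ltd).
have [Cy nsy] := priority_gen_fresh ex.
split; last by rewrite mem_undup.
by apply: Cy; left; split; [exact: leq_trans lek|exact: enumeration_consistent].
Qed.

End PriorityGenerator.

(* Languages L_1, L_2, ... are C 0, C 1, ...; "i <= n" (1-based) is "i < n" here. *)
Theorem mainTheorem1 :
  forall (U : countType), countably_infinite U ->
  forall (C : nat -> U -> Prop), (forall i, infinite_lang (C i)) ->
  forall n : nat,
  exists A : algorithm U,
    nonuniformly_generates A C /\
    forall (G : algorithm U) (i : nat),
      i < n -> olt (gen_time G (C i)) (gen_time A (C i)) ->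
      exists j, j < n /\ j <> i /\ olt (gen_time A (C j)) (gen_time G (C j)).
Proof.
move=> U [u _] C _ n.
pose time (G : algorithm U) j := gen_time G (C j).
have finite_priority G0 : finite_below time n (priority_gen C n G0).
  move=> j _; have [T worksT] := priority_gen_nonuniform C n G0 j.
  by rewrite /time; have [T' ->] := gen_time_le worksT.
have [G0 finG0 minG0] :=
  exists_total_minimizer (ex_intro _ _ (finite_priority (fun=> u 0))).
exists (priority_gen C n G0); split; first exact: priority_gen_nonuniform.
apply: total_minimizer_pareto => // G finG.
apply: leq_trans (minG0 G finG); apply: total_le_pointwise => // j T ltjn G0j.
exact/gen_time_le/priority_gen_works_certified.
Qed.
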